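(* Let $B=(b_{jk})_{1\le j,k\le n}$ be a complex matrix with units on the diagonal such that $|b_{jk}|<3/2$ whenever $j<k$ and $|b_{jk}|<4^{-n}$ whenever $j>k$. Then $B$ is non-degenerate. *)

From HB Require Import structures.
From mathcomp Require Import all_boot all_order all_algebra.
From mathcomp Require Import complex.
From mathcomp Require Import reals.

From HB Require Import structures.
From mathcomp Require Import all_boot all_order all_algebra.
From mathcomp Require Import complex.
From mathcomp Require Import reals.
From mathcomp Require Import ring.
Import Order.TTheory GRing.Theory Num.Theory.
Local Open Scope ring_scope.
Local Open Scope complex_scope.

(* If v B = 0, let a_k = |v_k|, S = sum_k a_k and P_k = sum_(j<k) a_j.  Column k
   of v B = 0 gives a_k <= c P_k + e S, hence c P_k + e S grows at most by the
   factor 1 + c at each step: c S + e S <= e S (1 + c)^n.  When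
   e (1 + c)^n < c + e this forces S = 0, i.e. v = 0. *)

Section LeftKernelBound.

Context {F : numFieldType} {n : nat} {B : 'M[F]_n} {c e : F}.
Hypotheses (c_ge0 : 0 <= c) (e_ge0 : 0 <= e).
Hypothesis diagB : forall j, B j j = 1.
Hypothesis upperB : forall j k : 'I_n, (j < k)%N -> `|B j k| <= c.
Hypothesis lowerB : forall j k : 'I_n, (k < j)%N -> `|B j k| <= e.

Context {v : 'rV[F]_n}.
Hypothesis vB0 : v *m B = 0.

Let a (j : 'I_n) : F := `|v 0 j|.
Let S : F := \sum_j a j.
Let P (k : nat) : F := \sum_(j : 'I_n | (j < k)%N) a j.

Let a_ge0 j : 0 <= a j. Proof. exact: normr_ge0. Qed.

Lemma kernel_entry_le (k : 'I_n) : a k <= c * P k + e * S.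
Proof.
have /eqP : (v *m B) 0 k = 0 by rewrite vB0 mxE.
rewrite !mxE (bigD1 k) //= diagB mulr1 addr_eq0 /a => /eqP ->.
rewrite normrN; apply: le_trans; first exact: ler_norm_sum.
have term_le (i : 'I_n) : i != k ->
    `|v 0 i * B i k| <= (if (i < k)%N then c * a i else 0) + e * a i.
  move=> neq_ik; rewrite normrM mulrC.
  case: ltngtP => [ik|ki|/val_inj eq_ik]; last by rewrite eq_ik eqxx in neq_ik.
  - by rewrite -[leLHS]addr0 lerD ?mulr_ge0 // ler_wpM2r ?upperB.
  - by rewrite add0r ler_wpM2r ?lowerB.
have -> : c * P k + e * S
    = \sum_(i < n) ((if (i < k)%N then c * a i else 0) + e * a i).
  by rewrite big_split /= -big_mkcond -!mulr_sumr.
apply: le_trans (ler_sum _ term_le) _.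
rewrite [leRHS](bigD1 k) //= lerDr addr_ge0 ?mulr_ge0 //.
by case: ifP => // _; rewrite mulr_ge0.
Qed.

Lemma partial_sumS (k : 'I_n) : P k.+1 = P k + a k.
Proof.
rewrite /P (bigD1 k) //= addrC; congr (_ + _); apply: eq_bigl => j.
by rewrite ltnS ltn_neqAle andbC.
Qed.

Lemma partial_sum_growth k : (k <= n)%N -> c * P k + e * S <= e * S * (1 + c) ^+ k.
Proof.
elim: k => [|k IHk] lt_kn.
  by rewrite /P big_pred0 ?mulr0 ?add0r ?expr0 ?mulr1.
rewrite (partial_sumS (Ordinal lt_kn)) /=.
apply: (@le_trans _ _ ((1 + c) * (c * P k + e * S))).
  have -> : (1 + c) * (c * P k + e * S) = c * P k + c * (c * P k + e * S) + e * S.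
    by ring.
  by rewrite mulrDr -!addrA lerD2l lerD2r; apply: ler_wpM2l; last exact: kernel_entry_le.
rewrite exprSr mulrA mulrC.
by apply: ler_wpM2r; [rewrite addr_ge0 | exact/IHk/ltnW].
Qed.

Lemma kernel_sum_le : (c + e) * S <= e * (1 + c) ^+ n * S.
Proof.
have P_n : P n = S by apply: eq_bigl => j; exact: ltn_ord.
by rewrite mulrDl mulrAC -{1}P_n partial_sum_growth.
Qed.

End LeftKernelBound.

Lemma det_unit_diag_neq0 {F : numFieldType} {n} {B : 'M[F]_n} {c e : F} :
  0 <= c -> 0 <= e -> e * (1 + c) ^+ n < c + e ->
  (forall j, B j j = 1) ->
  (forall j k : 'I_n, (j < k)%N -> `|B j k| <= c) ->
  (forall j k : 'I_n, (k < j)%N -> `|B j k| <= e) ->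
  \det B != 0.
Proof.
move=> c_ge0 e_ge0 small_e diagB upperB lowerB.
apply/det0P => -[v v_neq0 vB0].
have S_gt0 : 0 < \sum_j `|v 0 j|.
  rewrite lt_def sumr_ge0 // andbT; apply: contra v_neq0 => /eqP S0.
  apply/eqP/matrixP => i j; rewrite mxE ord1; apply/eqP/normr0P.
  exact: (psumr_eq0P (fun j _ => normr_ge0 (v 0 j)) S0).
have := kernel_sum_le c_ge0 e_ge0 diagB upperB lowerB vB0.
by rewrite ler_pM2r // => /(lt_le_trans small_e); rewrite ltxx.
Qed.

Theorem lemma9 (R : realType) (n : nat) (B : 'M[R[i]]_n) :
  (forall j : 'I_n, B j j = 1) ->
  (forall j k : 'I_n, (j < k)%N -> `|B j k| < 3%:R / 2%:R) ->
  (forall j k : 'I_n, (k < j)%N -> `|B j k| < (4%:R ^+ n)^-1) ->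
  \det B != 0.
Proof.
move=> diagB upperB lowerB.
have two_gt0 : 0 < 2%:R :> R[i] by rewrite ltr0n.
have c_ge0 : 0 <= 3%:R / 2%:R :> R[i] by rewrite divr_ge0 ?ler0n.
have c_gt1 : 1 < 3%:R / 2%:R :> R[i] by rewrite ltr_pdivlMr // mul1r ltr_nat.
have growth_le4 : 1 + 3%:R / 2%:R <= 4%:R :> R[i].
  by rewrite -(ler_pM2r two_gt0) mulrDl divfK ?gt_eqF // mul1r -natrM -natrD ler_nat.
have e_ge0 : 0 <= (4%:R ^+ n)^-1 :> R[i] by rewrite invr_ge0 exprn_ge0 ?ler0n.
apply: (det_unit_diag_neq0 c_ge0 e_ge0 _ diagB).
- apply: (@le_lt_trans _ _ 1); last by rewrite (lt_le_trans c_gt1) ?lerDl.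
  rewrite mulrC ler_pdivrMr ?exprn_gt0 ?ltr0n // mul1r.
  by apply: lerXn2r; rewrite ?nnegrE ?addr_ge0 ?ler0n.
- by move=> j k lt_jk; exact/ltW/upperB.
- by move=> j k lt_kj; exact/ltW/lowerB.
Qed.
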